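(* Let $q\in\{2,4\}$ and let $n,\kappa$ be integers with $1\le \kappa<n$. Let $A_{\kappa\text{-WMU},q,n}$ denote the maximum size of a $\kappa$-weakly mutually uncorrelated code $\mathcal{C}\subseteq \mathbb{F}_q^n$. Then \[ c_q\,\frac{q^{n}}{n-\kappa+1}\le A_{\kappa\text{-WMU},q,n}\le \frac{q^{n}}{n-\kappa+1},\qquad\text{where } c_q=\frac{(q-1)^2(2q-1)}{4q^4}. \]
   Context: $\mathbb{F}_q$ is the finite field with $q$ elements. For a sequence $\mathbf{a}=(a_1,\dots,a_n)$ write $\mathbf{a}_i^j=(a_i,\dots,a_j)$ for $i\le j$. A code $\mathcal{C}\subseteq\mathbb{F}_q^n$ is $\kappa$-weakly mutually uncorrelated ($\kappa$-WMU), for $1\le\kappa<n$, if for all (not necessarily distinct) $\mathbf{a},\mathbf{b}\in\mathcal{C}$ and all $l$ with $\kappa\le l<n$ one has $\mathbf{a}_1^{l}\neq \mathbf{b}_{n-l+1}^{n}$, i.e. no proper prefix of length at least $\kappa$ of a codeword equals a suffix of a codeword (including itself). *)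

From mathcomp Require Import all_boot all_order all_algebra.
Set Implicit Arguments. Unset Strict Implicit. Unset Printing Implicit Defensive.

(* Words of length n over alphabet T are n.-tuples; positions are 1-based in
   the paper: a_1^l = take l a, a_{n-l+1}^n = drop (n - l) a. *)

Definition WMU (T : finType) (n kappa : nat) (C : {set n.-tuple T}) : bool :=
  [forall a in C, forall b in C, forall l : 'I_n,
     (kappa <= l) ==> (take l (val a) != drop (n - l) (val b))].

Definition A_WMU (T : finType) (n kappa : nat) : nat :=
  \max_(C : {set n.-tuple T} | WMU kappa C) #|C|.

From mathcomp Require Import all_boot all_order all_algebra zify ring lra.
Set Implicit Arguments. Unset Strict Implicit. Unset Printing Implicit Defensive.
Import Order.TTheory GRing.Theory Num.Theory.

(* Upper bound: for a kappa-WMU code C the rotations [rot j a], a in C and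
   0 <= j <= n - kappa, are pairwise distinct, since [rot j a = rot j' b] with
   j < j' makes the prefix of length n - (j' - j) >= kappa of a equal to a
   suffix of b.

   Lower bound: fix letters z <> o, an integer k and the marker z^k o.  The
   words that begin with the marker, end with a letter other than z and carry
   no marker at a position s with k < s <= n - kappa form a kappa-WMU code:
   an overlap of a prefix of a with a suffix of b would place a marker of b at
   such a position.  A union bound leaves at least
   (q - 1) q^(n-k-2) - (n - kappa) q^(n-2k-2) of them, and choosing k with
   2(n - kappa)/(q - 1) < q^k <= 2q(n - kappa)/(q - 1) turns this into
   c_q q^n / (n - kappa + 1).  When the marker does not fit into the word,
   the single word o z^(n-1) already suffices. *)

Lemma prod_nat_const_on (a b c : nat) (f : nat -> nat) :
  (forall i, a <= i < b -> f i = c) -> \prod_(a <= i < b) f i = c ^ (b - a).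
Proof. by move=> fc; rewrite -prod_nat_const_nat; apply: eq_big_nat. Qed.

Lemma card_bigcup_le (I : Type) (T : finType) (r : seq I) (P : pred I)
    (A : I -> {set T}) :
  #|\big[@setU T/set0]_(i <- r | P i) A i| <= \sum_(i <- r | P i) #|A i|.
Proof.
apply: (big_ind2 (fun (S : {set T}) x => #|S| <= x)) => [|S1 x1 S2 x2 le1 le2|//].
  by rewrite cards0.
by apply: leq_trans (leq_card_setU S1 S2) _; apply: leq_add.
Qed.

Section Cylinders.
Variables (T : finType) (n : nat).

Definition cylinder (g : nat -> {pred T}) : {set n.-tuple T} :=
  [set t | [forall i : 'I_n, tnth t i \in g i]].

Lemma cylinderP x0 g (t : n.-tuple T) :
  reflect (forall i, i < n -> nth x0 t i \in g i) (t \in cylinder g).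
Proof.
rewrite inE; apply: (iffP forallP) => [gt i ltin | gt i].
  by have := gt (Ordinal ltin); rewrite (tnth_nth x0).
by rewrite (tnth_nth x0) gt.
Qed.

Lemma card_cylinder g : #|cylinder g| = \prod_(0 <= i < n) #|g i|.
Proof.
pose tuple_of (f : {ffun 'I_n -> T}) : n.-tuple T := [tuple f i | i < n].
have tuple_of_inj : injective tuple_of.
  move=> f1 f2 /(congr1 (fun t => tnth t)) eqf; apply/ffunP => i.
  by have := congr1 (fun h => h i) eqf; rewrite !tnth_mktuple.
have -> : cylinder g = tuple_of @: [set f | f \in family (fun i : 'I_n => g i)].
  apply/setP => t; rewrite inE; apply/forallP/imsetP => [gt | [f]].
    exists [ffun i => tnth t i]; first by rewrite inE; apply/familyP => i; rewrite ffunE.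
    by apply: eq_from_tnth => i; rewrite tnth_mktuple ffunE.
  by rewrite inE => /familyP gf -> i; rewrite tnth_mktuple.
by rewrite card_imset // cardsE card_family foldrE big_map big_enum big_mkord.
Qed.

End Cylinders.

Section MarkerCode.
Variables (T : finType) (z o : T) (n k : nat).

Definition marker (s i : nat) : {pred T} :=
  if s <= i < s + k then pred1 z else if i == s + k then pred1 o else predT.

Lemma mem_marker s i x :
  (x \in marker s i) = if s <= i < s + k then x == z else if i == s + k then x == o else true.
Proof. by rewrite /marker; do 2?case: ifP. Qed.

Lemma card_marker s i : #|marker s i| = if s <= i <= s + k then 1 else #|T|.
Proof.
rewrite /marker; case: ifP => [/andP[le_si lt_ik] | /negbT out_si].
  by rewrite card1 le_si ltnW.
case: ifP => [/eqP -> | /negbT ne_i]; first by rewrite card1 leq_addr leqnn.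
by rewrite ifF ?cardT //; lia.
Qed.

Definition double_marked (s : nat) : {set n.-tuple T} :=
  cylinder n (fun i => if i <= k then marker 0 i else marker s i).

Lemma card_double_marked s :
  k < s -> s + k < n -> #|double_marked s| * #|T| ^ k = #|T| ^ (n - k.+2).
Proof.
move=> lt_ks lt_skn; rewrite card_cylinder (big_cat_nat _ (n := k.+1))
  1?(big_cat_nat _ (m := k.+1) (n := s)) 1?(big_cat_nat _ (m := s) (n := (s + k).+1)); try lia.
rewrite (@prod_nat_const_on 0 k.+1 1) => [|i lt_ik]; last first.
  by rewrite ifT ?card_marker ?ifT //; lia.
rewrite (@prod_nat_const_on k.+1 s #|T|) => [|i /andP[lt_ki lt_is]]; last first.
  by rewrite ifF ?card_marker ?ifF //; lia.
rewrite (@prod_nat_const_on s (s + k).+1 1) => [|i /andP[le_si lt_i]]; last first.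
  by rewrite ifF ?card_marker ?ifT //; lia.
rewrite (@prod_nat_const_on (s + k).+1 n #|T|) => [|i /andP[lt_i lt_in]]; last first.
  by rewrite ifF ?card_marker ?ifF //; lia.
by rewrite /= !exp1n !mul1n -!expnD; f_equal; lia.
Qed.

Hypothesis k_lt_n : k.+2 <= n.

Definition headed : {set n.-tuple T} :=
  cylinder n (fun i => if i == n.-1 then predC1 z : {pred T} else marker 0 i).

Lemma card_headed : #|headed| = (#|T| - 1) * #|T| ^ (n - k.+2).
Proof.
rewrite card_cylinder (big_cat_nat _ (n := k.+1)) 1?(big_cat_nat _ (m := k.+1) (n := n.-1)); try lia.
rewrite (@prod_nat_const_on 0 k.+1 1) => [|i lt_ik]; last first.
  by rewrite ifF ?card_marker ?ifT //; lia.
rewrite (@prod_nat_const_on k.+1 n.-1 #|T|) => [|i /andP[lt_ki lt_in]]; last first.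
  by rewrite ifF ?card_marker ?ifF //; lia.
rewrite (@prod_nat_const_on n.-1 n (#|T| - 1)) => [|i lt_i]; last first.
  by rewrite ifT ?cardC1 ?subn1 //; lia.
rewrite /= exp1n mul1n (_ : n - n.-1 = 1) ?expn1 1?mulnC //; do 2 f_equal; lia.
Qed.

Lemma headed_marked_sub s t :
  k < s -> t \in headed -> t \in cylinder n (marker s) -> t \in double_marked s.
Proof.
move=> lt_ks /(cylinderP z) ht /(cylinderP z) mt; apply/(cylinderP z) => i lt_in.
case: ifP => [le_ik | _]; last exact: mt.
by have := ht i lt_in; rewrite ifF //; lia.
Qed.

Lemma headed_nth t : t \in headed ->
  [/\ forall i, i < k -> nth z t i = z, nth z t k = o & nth z t n.-1 != z].
Proof.
move/(cylinderP z) => ht; split.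
- move=> i lt_ik; move: (ht i ltac:(lia)).
  by rewrite ifF ?mem_marker ?ifT; [move/eqP | lia..].
- move: (ht k ltac:(lia)); rewrite ifF; last lia.
  by rewrite mem_marker add0n ltnn andbF eqxx => /eqP.
- by move: (ht n.-1 ltac:(lia)); rewrite eqxx.
Qed.

Definition marker_code (kappa : nat) : {set n.-tuple T} :=
  [set t in headed | [forall j : 'I_(n - kappa - k),
     (j + k.+1 + k < n) ==> (t \notin cylinder n (marker (j + k.+1)))]].

Lemma marker_code_WMU kappa : z != o -> 0 < kappa -> WMU kappa (marker_code kappa).
Proof.
move=> neq_zo kappa_gt0.
apply/forallP => a; apply/implyP => /setIdP[a_headed _].
apply/forallP => b; apply/implyP => /setIdP[b_headed /forallP b_unmarked].
apply/forallP => l; apply/implyP => le_kappa_l; apply/eqP => pre_eq_suf.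
have lt_ln := ltn_ord l.
have [a_z a_o _] := headed_nth a_headed.
have [_ b_o b_last] := headed_nth b_headed.
have ab j : j < l -> nth z a j = nth z b (n - l + j).
  by move=> lt_jl; have := congr1 (fun w => nth z w j) pre_eq_suf; rewrite /= nth_take ?nth_drop.
(* Either the overlap ends inside the z's of a's marker while b ends with a
   letter other than z, or the o of b's marker faces a z of a's marker, or b
   carries a forbidden marker at n - l. *)
have [le_lk | lt_kl] := leqP l k.
  move: b_last; rewrite (_ : n.-1 = n - l + l.-1); last lia.
  by rewrite -ab ?a_z ?eqxx //; lia.
have [le_shift_k | lt_k_shift] := leqP (n - l) k.
  move: (ab (k - (n - l)) ltac:(lia)); rewrite a_z; last lia.
  by rewrite (_ : n - l + _ = k) ?b_o; [move/eqP; rewrite (negbTE neq_zo) | lia].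
have lt_shift : n - l - k.+1 < n - kappa - k by lia.
move: (b_unmarked (Ordinal lt_shift)); rewrite /= subnK; last lia.
rewrite (_ : n - l + k < n); last lia.
apply/negP/negPn/(cylinderP z) => i lt_in; rewrite mem_marker.
case: ifP => [/andP[le_i lt_i] | _].
  by rewrite -(subnKC le_i) -ab ?a_z //; lia.
case: ifP => // /eqP ->; by rewrite -ab ?a_o.
Qed.

Lemma card_headed_le_code kappa :
  #|headed| * #|T| ^ k <= #|marker_code kappa| * #|T| ^ k + (n - kappa) * #|T| ^ (n - k.+2).
Proof.
pose fits (j : 'I_(n - kappa - k)) := j + k.+1 + k < n.
pose marked := \bigcup_(j | fits j) double_marked (j + k.+1).
have headed_sub : headed \subset marker_code kappa :|: marked.
  apply/subsetP => t t_headed; rewrite inE [t \in marker_code kappa]inE t_headed /=.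
  case: forallP => //= /forallP; rewrite negb_forall => /existsP[j].
  rewrite negb_imply negbK => /andP[fits_j t_marked].
  by apply/bigcupP; exists j => //; apply: headed_marked_sub; rewrite // addnS ltnS leq_addl.
have card_marked : #|marked| * #|T| ^ k <= (n - kappa) * #|T| ^ (n - k.+2).
  apply: leq_trans (leq_mul (card_bigcup_le _ _ _) (leqnn _)) _.
  rewrite big_distrl /= (eq_bigr (fun _ => #|T| ^ (n - k.+2))) => [|j fits_j]; last first.
    by rewrite card_double_marked //; lia.
  rewrite sum_nat_cond_const leq_mul // (leq_trans (max_card _)) // card_ord; lia.
apply: leq_trans (leq_mul (subset_leq_card headed_sub) (leqnn _)) _.
apply: leq_trans (leq_mul (leq_card_setU _ _) (leqnn _)) _.
by rewrite mulnDl leq_add2l.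
Qed.

End MarkerCode.

Section Rotations.
Variables (T : finType) (n kappa : nat) (C : {set n.-tuple T}).
Hypothesis C_WMU : WMU kappa C.

Lemma WMU_rot_neq (a b : n.-tuple T) e :
  a \in C -> b \in C -> 0 < e <= n - kappa -> rot e b != a.
Proof.
move=> aC bC /andP[e_gt0 le_e]; have lt_l : n - e < n by lia.
move/forallP/(_ a): C_WMU; rewrite aC => /forallP/(_ b); rewrite bC.
move=> /forallP/(_ (Ordinal lt_l)) /implyP /(_ ltac:(simpl; lia)) /=.
apply: contra => /eqP <-.
by rewrite subKn ?take_size_cat ?size_drop ?size_tuple //; lia.
Qed.

Lemma card_WMU_le : #|C| * (n - kappa + 1) <= #|T| ^ n.
Proof.
pose rotate (p : n.-tuple T * 'I_(n - kappa + 1)) := [tuple of rot p.2 p.1].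
have rotate_inj : {in setX C setT &, injective rotate}.
  move=> [a i] [b j] /setXP[aC _] /setXP[bC _] /(congr1 val) /= eq_rot.
  wlog le_ij : a b i j aC bC eq_rot / i <= j.
    by move=> wlog_le; case: (leqP i j) => [|/ltnW] le; [|symmetry]; apply: wlog_le.
  have rot_ba : rot (j - i) b = a.
    apply: (@rot_inj i); rewrite eq_rot -rotD ?subnKC // size_tuple.
    by have := ltn_ord j; lia.
  have eq_ij : j - i = 0.
    have [// | ji_gt0] := posnP (j - i).
    have le_ji : j - i <= n - kappa by have := ltn_ord j; lia.
    by move: (WMU_rot_neq aC bC (e := j - i)); rewrite ji_gt0 le_ji rot_ba eqxx => /(_ isT).
  by move: rot_ba; rewrite eq_ij rot0 => /val_inj ->; congr pair; apply: val_inj => /=; lia.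
have := card_in_imset rotate_inj; rewrite cardsX cardsT card_ord => <-.
by rewrite -card_tuple max_card.
Qed.

End Rotations.

Lemma card_le_A_WMU (T : finType) (n kappa : nat) (C : {set n.-tuple T}) :
  WMU kappa C -> #|C| <= A_WMU T n kappa.
Proof. exact: (@leq_bigmax_cond _ (fun C => WMU kappa C) (fun C => #|C|)). Qed.

Lemma A_WMU_mul_le (T : finType) (n kappa : nat) :
  A_WMU T n kappa * (n - kappa + 1) <= #|T| ^ n.
Proof.
rewrite -leq_divRL ?addn1 //; apply/bigmax_leqP => C C_WMU.
by rewrite leq_divRL // -addn1 card_WMU_le.
Qed.

Lemma A_WMU_gt0 (T : finType) (n kappa : nat) :
  1 < #|T| -> 0 < kappa -> 0 < A_WMU T n kappa.
Proof.
move=> /card_gt1P[z [o [_ _ neq_zo]]] kappa_gt0.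
pose spike := cylinder n (fun i => pred1 (if i == 0 then o else z)).
apply: leq_trans (card_le_A_WMU (C := spike) _).
  by rewrite card_cylinder (@prod_nat_const_on 0 n 1) ?exp1n // => i _; rewrite card1.
apply/forallP => a; apply/implyP => /(cylinderP z) a_spike.
apply/forallP => b; apply/implyP => /(cylinderP z) b_spike.
apply/forallP => l; apply/implyP => le_kappa_l; have lt_ln := ltn_ord l.
apply/eqP => /(congr1 (nth z ^~ 0)); rewrite nth_take ?nth_drop ?addn0; try lia.
move: (a_spike 0 ltac:(lia)) (b_spike (n - l) ltac:(lia)); rewrite ifF; last lia.
by rewrite !inE => /eqP -> /eqP ->; apply/eqP; rewrite eq_sym.
Qed.

Lemma exists_pow_bracket (q d x : nat) :
  1 < q -> 0 < d <= x -> exists k, d * q ^ k <= x < d * q ^ k.+1.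
Proof.
move=> q_gt1 /andP[d_gt0 le_dx]; exists (trunc_log q (x %/ d)).
rewrite mulnC -leq_divRL // trunc_logP ?divn_gt0 //=.
by rewrite mulnC -ltn_divLR // trunc_log_ltn.
Qed.

Local Open Scope ring_scope.

Section WMUConstant.
Variable R : realFieldType.

Definition wmu_const (q : R) : R := (q - 1) ^+ 2 * (2 * q - 1) / (4 * q ^+ 4).

(* The constant is chosen so that this quadratic in y has the roots
   2qm/((q - 1)(2q - 1)) and 2qm/(q - 1), which are a factor 2q - 1 >= q apart. *)
Lemma wmu_quadratic_le (q y m : R) : 1 <= q -> 0 <= m ->
  (q - 1) * y <= 2 * q * m -> 2 * m <= (q - 1) * y ->
  (q - 1) ^+ 2 * (2 * q - 1) * y ^+ 2 <= 4 * q ^+ 2 * m * ((q - 1) * y - m).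
Proof.
move=> q_ge1 m_ge0 y_le y_ge; rewrite -subr_ge0.
have -> : 4 * q ^+ 2 * m * ((q - 1) * y - m) - (q - 1) ^+ 2 * (2 * q - 1) * y ^+ 2
    = (2 * q * m - (q - 1) * y) * ((2 * q - 1) * ((q - 1) * y) - 2 * q * m) by ring.
apply: mulr_ge0; first lra.
have q1_ge0 : 0 <= q - 1 by lra.
have q21_ge0 : 0 <= 2 * q - 1 by lra.
have := ler_wpM2l q21_ge0 y_ge; have := mulr_ge0 q1_ge0 m_ge0.
lra.
Qed.

Lemma wmu_const_le (q Q y m N : R) : 1 <= q -> 0 < Q -> 0 < y -> 0 <= m ->
  (q - 1) * y <= 2 * q * m -> 2 * m <= (q - 1) * y ->
  (q - 1) * Q * y <= N * y + m * Q ->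
  wmu_const q * (Q * q ^+ 2 * y / (m + 1)) <= N.
Proof.
move=> q_ge1 Q_gt0 y_gt0 m_ge0 y_le y_ge count.
have quad := wmu_quadratic_le q_ge1 m_ge0 y_le y_ge.
rewrite /wmu_const (_ : _ * _ = (q - 1) ^+ 2 * (2 * q - 1) * y ^+ 2 * Q / (4 * q ^+ 2 * (m + 1) * y)); last first.
  by field; rewrite !lt0r_neq0 //; lra.
rewrite ler_pdivrMr; last by rewrite !pmulr_rgt0 ?exprn_gt0; lra.
have slack : 0 <= ((q - 1) * y - m) * Q by apply: mulr_ge0; lra.
have slack_le : ((q - 1) * y - m) * Q <= N * y by lra.
have := ler_wpM2r (ltW Q_gt0) quad.
have := ler_pM m_ge0 slack (ler_wpDr ler01 (lexx m)) slack_le.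
have : 0 <= 4 * q ^+ 2 by rewrite pmulr_rge0 ?sqr_ge0.
nra.
Qed.

Lemma wmu_const_le1 (q P y m : R) : 1 <= q -> 0 <= m -> 0 <= P ->
  P <= q * y -> (q - 1) * y <= 2 * q * m -> wmu_const q * (P / (m + 1)) <= 1.
Proof.
move=> q_ge1 m_ge0 P_ge0 P_le y_le.
rewrite /wmu_const (_ : _ * _ = (q - 1) ^+ 2 * (2 * q - 1) * P / (4 * q ^+ 4 * (m + 1))); last first.
  by field; rewrite !lt0r_neq0 //; lra.
rewrite ler_pdivrMr ?mul1r; last by rewrite !pmulr_rgt0 ?exprn_gt0; lra.
have coef_ge0 : 0 <= (q - 1) * (2 * q - 1) * q by apply: mulr_ge0; [apply: mulr_ge0|]; lra.
have q1_ge0 : 0 <= q - 1 by lra.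
have := ler_wpM2l (mulr_ge0 coef_ge0 q1_ge0) P_le.
have := ler_wpM2l coef_ge0 y_le.
have : 0 <= q ^+ 2 * m * (3 * q - 1) by apply: mulr_ge0; [apply: mulr_ge0|]; nra.
have : 0 <= q ^+ 4 by rewrite exprn_ge0 //; lra.
nra.
Qed.

End WMUConstant.

Section LowerBound.
Variables (R : realFieldType) (T : finType) (n kappa k : nat).
Hypotheses (T_gt1 : (1 < #|T|)%N) (kappa_gt0 : (0 < kappa)%N).
Hypothesis pow_le : ((#|T| - 1) * #|T| ^ k <= 2 * #|T| * (n - kappa))%N.

Let q : R := #|T|%:R.
Let m : R := (n - kappa)%:R.

Let q_ge1 : 1 <= q. Proof. by rewrite ler1n ltnW. Qed.

Let q_gt0 : 0 < q. Proof. by rewrite ltr0n ltnW. Qed.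

Let natr_q1 : (#|T| - 1)%:R = q - 1. Proof. by rewrite natrB // ltnW. Qed.

Let y_le : (q - 1) * q ^+ k <= 2 * q * m.
Proof. by move: pow_le; rewrite -(ler_nat R) !natrM natrX natr_q1. Qed.

Lemma A_WMU_lower_large :
  (k.+2 <= n)%N -> (2 * (n - kappa) < (#|T| - 1) * #|T| ^ k)%N ->
  wmu_const q * (q ^+ n / (n - kappa + 1)%:R) <= (A_WMU T n kappa)%:R.
Proof.
move=> le_kn pow_gt.
have [z [o [_ _ neq_zo]]] := card_gt1P T_gt1.
have count := @card_headed_le_code T z o n k le_kn kappa.
rewrite card_headed // in count.
apply: le_trans (_ : #|marker_code z o n k kappa|%:R <= _); last first.
  by rewrite ler_nat card_le_A_WMU // marker_code_WMU.
rewrite natrD (_ : q ^+ n = q ^+ (n - k.+2) * q ^+ 2 * q ^+ k); last first.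
  by rewrite -!exprD; congr (_ ^+ _); lia.
apply: wmu_const_le; rewrite ?exprn_gt0 ?ler0n //.
- by move: pow_gt; rewrite -(ltr_nat R) !natrM natrX natr_q1 => /ltW.
- by move: count; rewrite -(ler_nat R) !natrD !natrM !natrX natr_q1.
Qed.

Lemma A_WMU_lower_small :
  (n <= k.+1)%N -> wmu_const q * (q ^+ n / (n - kappa + 1)%:R) <= (A_WMU T n kappa)%:R.
Proof.
move=> le_nk; apply: le_trans (_ : 1 <= _); last by rewrite ler1n A_WMU_gt0.
rewrite natrD; apply: (wmu_const_le1 (y := q ^+ k)) => //; rewrite ?exprn_ge0 ?ler0n //.
by rewrite -exprS; apply: ler_weXn2l.
Qed.

End LowerBound.

Lemma A_WMU_lower (R : realFieldType) (T : finType) (n kappa : nat) :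
  (1 < #|T|)%N -> (0 < kappa)%N -> (kappa < n)%N ->
  wmu_const (#|T|%:R : R) * (#|T|%:R ^+ n / (n - kappa + 1)%:R) <= (A_WMU T n kappa)%:R.
Proof.
move=> T_gt1 kappa_gt0 kappa_lt_n.
have [k /andP[pow_le pow_gt]] := @exists_pow_bracket #|T| (#|T| - 1) (2 * #|T| * (n - kappa))
  T_gt1 ltac:(apply/andP; split; nia).
have [le_kn | lt_nk] := leqP k.+2 n.
  apply: (A_WMU_lower_large _ _ _ pow_le) => //.
  by rewrite -(ltn_pmul2l (ltnW T_gt1)); move: pow_gt; rewrite expnS; lia.
exact: (A_WMU_lower_small _ _ _ pow_le).
Qed.

Theorem theorem3 (F : finFieldType) (q n kappa : nat) :
  #|F| = q -> (q = 2 \/ q = 4)%N -> (1 <= kappa)%N -> (kappa < n)%N ->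
  let c_q : rat := ((q%:R - 1) ^+ 2 * (2 * q%:R - 1)) / (4 * q%:R ^+ 4) in
  c_q * (q%:R ^+ n / (n - kappa + 1)%N%:R) <= (A_WMU F n kappa)%:R
  /\ (A_WMU F n kappa)%:R <= q%:R ^+ n / (n - kappa + 1)%N%:R :> rat.
Proof.
(* The bounds hold for every finite field. *)
move=> <- _ kappa_gt0 kappa_lt_n c_q.
have F_gt1 : (1 < #|F|)%N by apply/card_gt1P; exists 1, 0; rewrite !inE oner_neq0.
split; first exact: A_WMU_lower.
by rewrite ler_pdivlMr ?ltr0n ?addn1 // -natrX -natrM ler_nat -addn1 A_WMU_mul_le.
Qed.
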